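(* Let $B$ be a singleton board with $n$ columns, padded with columns of height zero on the left so that $\xi_m(B)=\langle z_1,\ldots,z_n\rangle$ has only non-negative entries. For each integer $k$ let $v_k$ be the number of entries of $\xi_m(B)$ equal to $k$, and let $M$ be the greatest integer with $v_M\ne0$. Let $S$ be the set of non-negative multiples of $m$ strictly less than $M$. Let $i$ be the least non-negative integer such that either $v_i>1$, or $v_i=1$ and $i$ is not a multiple of $m$. If $v_s\ge2$ for all $s\in S$ with $s>i$, then $B$ is connected by a sequence of edges in $G_m(B)$ to a board $B'$ with $m$-level root vector $\xi_m(B')=\langle 0,m,2m,\ldots,\lfloor M-1\rfloor_m,M,\ldots,z_n\rangle$; that is, the first $\frac{\lfloor M-1\rfloor_m}{m}+1$ entries of $\xi_m(B')$ are the non-negative multiples of $m$ from $0$ to $\lfloor M-1\rfloor_m$ in increasing order, and the next entry is the first occurrence of the value $M$.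
   Context: Fix an integer $m>0$. A Ferrers board is given by a weakly increasing sequence of non-negative integers $B=(b_1,\ldots,b_n)$ of column heights (cells in column $i$, rows $1,\ldots,b_i$, of the first quadrant); prepending height-$0$ columns on the left does not change the board, and boards are compared with the same number of columns by such padding. The rows are partitioned into levels: level $t$ consists of rows $(t-1)m+1,\ldots,tm$. An $m$-level rook placement of $k$ rooks is a set of $k$ cells of $B$, no two in the same level or the same column; $r_{k,m}(B)$ is their number, and two boards are $m$-level rook equivalent if they have equal $r_{k,m}$ for all $k\ge0$. For an integer $o$, $\lfloor o\rfloor_m$ is the largest multiple of $m$ that is $\le o$. $B$ is singleton if for each $i<n$, $b_i-\lfloor b_i\rfloor_m\ne0$ implies $\lfloor b_i\rfloor_m<\lfloor b_{i+1}\rfloor_m$. The $m$-level root vector of $B$ is $\xi_m(B)=\langle 0-b_1,m-b_2,\ldots,m(n-1)-b_n\rangle$. The $m$-level rook equivalence graph $G_m(B)$ of a singleton board $B$ has as vertices all singleton boards $m$-level rook equivalent to $B$, and $\{B_1,B_2\}$ is an edge iff, written with the same number of columns, $B_1$ and $B_2$ differ in exactly two columns $i,j$, where $B_1$ has $k$ more cells than $B_2$ in column $i$ and $k$ fewer in column $j$, for some $k>0$. *)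

From mathcomp Require Import all_boot all_order all_algebra.
From Stdlib Require Import Relations.
Set Implicit Arguments. Unset Strict Implicit. Unset Printing Implicit Defensive.
Import Order.TTheory GRing.Theory Num.Theory.
Local Open Scope ring_scope.

(* A board is a weakly increasing sequence of column heights (b_1,...,b_n),
   stored as a seq nat; column j (0-indexed) has cells in rows 1..nth 0 B j. *)
Definition is_board (B : seq nat) : Prop := sorted leq B.

Definition floorm (m : nat) (o : int) : int := o - (o %% m%:Z)%Z.

Definition singleton (m : nat) (B : seq nat) : Prop :=
  forall i : nat, (i.+1 < size B)%N ->
    (nth 0%N B i)%:Z - floorm m (nth 0%N B i)%:Z != 0 ->
    floorm m (nth 0%N B i)%:Z < floorm m (nth 0%N B i.+1)%:Z.

(* cells: (column c, row r+1) encoded as (c, r) with 0-indexed r;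
   sumn B bounds every column height. *)
Definition cell_in (B : seq nat) (c : 'I_(size B) * 'I_(sumn B)) : bool :=
  (c.2 < nth 0%N B c.1)%N.

(* row r+1 (0-indexed r) lies in level r %/ m + 1 *)
Definition rook_placement (m : nat) (B : seq nat)
    (S : {set 'I_(size B) * 'I_(sumn B)}) : bool :=
  [forall c in S, cell_in c] &&
  [forall c in S, forall d in S,
     (c != d) ==> ((c.1 != d.1) && (c.2 %/ m != d.2 %/ m)%N)].

Definition rook_num (m : nat) (B : seq nat) (k : nat) : nat :=
  #|[set S : {set 'I_(size B) * 'I_(sumn B)} |
      rook_placement m S && (#|S| == k)]|.

Definition rook_equiv (m : nat) (B1 B2 : seq nat) : Prop :=
  forall k : nat, rook_num m B1 k = rook_num m B2 k.

Definition root_vec (m : nat) (B : seq nat) : seq int :=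
  [seq (m * j)%N%:Z - (nth 0%N B j)%:Z | j <- iota 0 (size B)].

Definition root_count (m : nat) (B : seq nat) (k : int) : nat :=
  count_mem k (root_vec m B).

Definition pad (N : nat) (C : seq nat) : seq nat := nseq (N - size C) 0%N ++ C.

Definition G_edge (C1 C2 : seq nat) : Prop :=
  let N := maxn (size C1) (size C2) in
  exists (i j k : nat),
    [/\ (i < N)%N, (j < N)%N, i != j & (0 < k)%N] /\
    nth 0%N (pad N C1) i = (nth 0%N (pad N C2) i + k)%N /\
    (nth 0%N (pad N C1) j + k)%N = nth 0%N (pad N C2) j /\
    (forall l : nat, (l < N)%N -> l != i -> l != j ->
          nth 0%N (pad N C1) l = nth 0%N (pad N C2) l).

Definition G_vertex (m : nat) (B C : seq nat) : Prop :=
  [/\ is_board C, singleton m C & rook_equiv m B C].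

Definition G_step (m : nat) (B : seq nat) (C1 C2 : seq nat) : Prop :=
  [/\ G_vertex m B C1, G_vertex m B C2 & G_edge C1 C2].

Definition G_connected (m : nat) (B C1 C2 : seq nat) : Prop :=
  clos_refl_trans (seq nat) (G_step m B) C1 C2.

Definition i_cond (m : nat) (B : seq nat) (j : int) : bool :=
  (1 < root_count m B j)%N ||
  ((root_count m B j == 1%N) && ~~ (m%:Z %| j)%Z).

Definition least_i (m : nat) (B : seq nat) (i : int) : Prop :=
  [/\ 0 <= i, i_cond m B i &
      forall j : int, 0 <= j -> j < i -> ~~ i_cond m B j].

From mathcomp Require Import all_boot all_order all_algebra zify ring.
From Stdlib Require Import Relations Wf_nat Classical FunctionalExtensionality.
Import GRing.Theory Num.Theory.

Set Implicit Arguments.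
Unset Strict Implicit.
Unset Printing Implicit Defensive.

(* Since xi_m(B) is non-negative, B is encoded by the sequence z of naturals
   z_i = m i - b_i, and B is a singleton board exactly when z_0 = 0 and
   z_(i+1) <= floor_m(z_i) + m for all i.  When a column of height c is added to
   a singleton board, every level used by a rook lies below c, hence
   r_(k+1)(B c) = r_(k+1)(B) + r_k(B) (c - m k).  Written in terms of the root
   entries, consecutive steps of this recurrence commute, so the rook numbers
   only depend on the multiset of entries of z.  Therefore exchanging two entries
   z_p < z_r, when the result is still admissible, is an edge of G_m(B): it moves
   z_r - z_p cells from column p to column r.  Such exchanges decrease
   sum_i i z_i, so it suffices to find one whenever z does not start with
   0, m, ..., floor_m(M-1), M.  Let t be the first position where z deviates
   from this prefix, a = z_t < t m, and w the last entry of z larger than a.  If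
   no exchange were possible, then t m < w, and an entry at least
   s = floor_m(w-1) placed before w would force all later entries up to w to be
   at least w, so s would occur at most once.  But a satisfies the defining
   property of i, so i <= a < s < M and s occurs twice by hypothesis. *)

(** * Rook numbers of singleton boards *)

(* Placements in any grid 'I_a * 'I_b containing the board, so that columns can
   be added by induction; [rook_num] is the case a = size B, b = sumn B. *)
Section RookCount.
Variables (m a b : nat).
Implicit Types (C : seq nat) (S : {set 'I_a * 'I_b}).

Definition placement C S : bool :=
  [forall c in S, c.2 < nth 0 C c.1] &&
  [forall c in S, forall d in S, (c != d) ==> (c.1 != d.1) && (c.2 %/ m != d.2 %/ m)].

Definition rook_count C k : nat := #|[set S | placement C S && (#|S| == k)]|.

Lemma placementP C S :
  reflect ((forall c, c \in S -> c.2 < nth 0 C c.1) /\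
           (forall c d, c \in S -> d \in S -> c != d ->
              (c.1 != d.1) && (c.2 %/ m != d.2 %/ m)))
          (placement C S).
Proof.
apply: (iffP andP) => [[/forall_inP inC /forall_inP apart]|[inC apart]]; split.
- by move=> c /inC.
- by move=> c d /apart /forall_inP Sd /Sd /implyP.
- exact/forall_inP.
- by apply/forall_inP => c Sc; apply/forall_inP => d Sd; apply/implyP; apply: apart.
Qed.

Lemma rook_count0 C : rook_count C 0 = 1.
Proof.
rewrite /rook_count (_ : [set S | _] = [set set0]) ?cards1 //.
apply/setP => S; rewrite !inE; apply/andP/eqP => [[_ /eqP/cards0_eq //]|->].
by rewrite cards0; split=> //; apply/placementP; split=> c; rewrite inE.
Qed.

Lemma rook_count_nil k : rook_count [::] k.+1 = 0.
Proof.
apply/eqP; rewrite cards_eq0; apply/eqP/setP => S; rewrite !inE.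
apply/negbTE/negP => /andP [/placementP [inC _] /eqP cardS].
have /set0Pn [c /inC] : S != set0 by rewrite -card_gt0 cardS.
by rewrite nth_nil.
Qed.

End RookCount.

Lemma rook_num_count m B k : rook_num m B k = rook_count m (size B) (sumn B) B k.
Proof. by []. Qed.

Lemma sum_ord_lt b n : n <= b -> \sum_(r < b) (r < n : nat) = n.
Proof.
move=> nb; rewrite -big_mkcond /= -[RHS]card_ord -sum1_card.
exact: (big_ord_narrow_cond (P := xpredT)).
Qed.

Section FreeRows.
Variables (m a b : nat).
Hypothesis m_gt0 : 0 < m.

Lemma sum_level l : l.+1 * m <= b -> \sum_(r < b) (r %/ m == l : nat) = m.
Proof.
move=> lb.
have split_lt (r : 'I_b) : (r < l.+1 * m : nat) = (r %/ m == l : nat) + (r < l * m : nat).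
  rewrite eqn_leq leq_divRL // -(ltnS (r %/ m)) ltn_divLR // leqNgt.
  by case: ltnP => ? ; case: ltnP => ? //=; lia.
have := sum_ord_lt lb; rewrite (eq_bigr _ (fun r _ => split_lt r)) big_split /=.
rewrite sum_ord_lt; first lia.
by apply: leq_trans lb; rewrite leq_mul2r leqnSn orbT.
Qed.

Definition free_row (S : {set 'I_a * 'I_b}) (r : 'I_b) := [forall d in S, d.2 %/ m != r %/ m].

Lemma card_free_rows C S c : c <= b -> placement m C S ->
  (forall d, d \in S -> (d.2 %/ m).+1 * m <= c) ->
  #|[set r : 'I_b | (r < c) && free_row S r]| + m * #|S| = c.
Proof.
move=> cb /placementP [_ apart] below.
have occupied (r : 'I_b) :
    ((r < c) && ~~ free_row S r : nat) = \sum_(d in S) (r %/ m == d.2 %/ m : nat).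
  case: (boolP (free_row S r)) => [/forall_inP free|]; rewrite /= ?andbF.
    by rewrite big1 // => d /free; rewrite eq_sym => /negbTE ->.
  rewrite negb_forall_in => /existsP [d0 /andP [Sd0]]; rewrite negbK => /eqP lev0.
  rewrite (bigD1 d0) //= big1 => [|d /andP [Sd dd0]]; last first.
    by have /andP [_ ld] := apart _ _ Sd Sd0 dd0; rewrite -lev0 eq_sym (negbTE ld).
  by rewrite lev0 eqxx addn0 andbT (leq_trans _ (below _ Sd0)) // lev0 ltn_ceil.
have split_row (r : 'I_b) :
    (r < c : nat) = ((r < c) && free_row S r : nat) + ((r < c) && ~~ free_row S r : nat).
  by case: (r < c); case: (free_row S r).
rewrite -[RHS](sum_ord_lt cb) (eq_bigr _ (fun r _ => split_row r)) big_split /=.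
rewrite -sum1dep_card big_mkcond (eq_bigr _ (fun r _ => occupied r)) exchange_big /=.
congr (_ + _); rewrite (eq_bigr (fun _ => m)) => [|d Sd].
  by rewrite sum_nat_const mulnC.
exact: sum_level (leq_trans (below _ Sd) cb).
Qed.
End FreeRows.

Section Multiples.
Variable m : nat.
Hypothesis m_gt0 : 0 < m.

Definition next_multiple x := (x %/ m).+1 * m.

Definition ceil_multiple x := if x %% m == 0 then x else next_multiple x.

Lemma ltn_next_multiple x : x < next_multiple x.
Proof. exact: ltn_ceil. Qed.

Lemma next_multiple_leq_add x : next_multiple x <= x + m.
Proof. by rewrite /next_multiple mulSn addnC leq_add2r; exact: leq_divM. Qed.

Lemma leq_next_multiple x y : x <= y -> next_multiple x <= next_multiple y.
Proof. by move=> xy; rewrite leq_mul2r ltnS leq_div2r ?orbT. Qed.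

Lemma leq_ceil_multiple x : x <= ceil_multiple x.
Proof. by rewrite /ceil_multiple; case: eqP => // _; exact/ltnW/ltn_next_multiple. Qed.

Lemma next_multiple_mul j : next_multiple (j * m) = j.+1 * m.
Proof. by rewrite /next_multiple mulnK. Qed.

Lemma next_multiple_le_ceil r x : r < x -> next_multiple r <= ceil_multiple x.
Proof.
rewrite /ceil_multiple; case: eqP => [x_mod|_] rx; last exact/leq_next_multiple/ltnW.
have x_eq : x = x %/ m * m by rewrite {1}(divn_eq x m) x_mod addn0.
by rewrite [X in _ <= X]x_eq /next_multiple leq_mul2r ltn_divLR // -x_eq rx orbT.
Qed.

Lemma ceil_multiple_leq x y :
  (ceil_multiple x <= y) = (x <= y) && ((x %% m != 0) ==> (x %/ m < y %/ m)).
Proof.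
rewrite /ceil_multiple; case: eqP => _ /=; first by rewrite andbT.
rewrite /next_multiple -leq_divRL //; apply/idP/andP => [lt_div|[] //].
split=> //; rewrite ltnW // (leq_trans (ltn_next_multiple x)) //.
by rewrite /next_multiple -leq_divRL.
Qed.

Lemma ceil_multiple_sub j x : x <= m * j -> ceil_multiple (m * j - x) = m * j - x %/ m * m.
Proof.
move=> x_le; rewrite /ceil_multiple /next_multiple.
have x_eq := divn_eq x m; set q := x %/ m in x_eq *; set s := x %% m in x_eq.
have s_lt : s < m by exact: ltn_pmod.
case: (posnP s) => [s0|s_gt0].
  have -> : m * j - x = (j - q) * m by rewrite x_eq s0 addn0 mulnBl mulnC.
  by rewrite modnMl eqxx mulnBl mulnC.
have q_lt : q < j by rewrite -(ltn_pmul2r m_gt0); lia.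
have -> : m * j - x = (j - q).-1 * m + (m - s) by nia.
rewrite modnMDl modn_small ?divnMDl ?divn_small ?subn_eq0 1?(leqNgt m s) ?s_lt; try lia.
by rewrite /= addn0 prednK ?subn_gt0 // mulnBl mulnC.
Qed.

Lemma floor_pred_lt w : 0 < w -> m * (w.-1 %/ m) < w.
Proof. by move=> w_gt0; rewrite mulnC (leq_ltn_trans (leq_divM _ _)) // ltn_predL. Qed.

Lemma leq_next_multiple_floor w x : m * (w.-1 %/ m) <= x -> w <= next_multiple x.
Proof.
move=> le_x; apply: leq_trans (leq_next_multiple le_x).
by rewrite mulnC next_multiple_mul; case: w {le_x} => // w; exact: ltn_ceil.
Qed.

End Multiples.

(* ceil_m(b_i) <= b_(i+1): every level meeting a column lies below the top of
   the next one. *)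
Definition ceil_sorted m (C : seq nat) := sorted (fun x y => ceil_multiple m x <= y) C.

Lemma ceil_sorted_rcons m C c : 0 < m -> ceil_sorted m (rcons C c) ->
  ceil_sorted m C /\ forall j, j < size C -> ceil_multiple m (nth 0 C j) <= c.
Proof.
move=> m_gt0 sortedC; split; first by move: sortedC; rewrite -cats1 => /cat_sorted2 [].
have ceil_trans : ssrbool.transitive (fun x y => ceil_multiple m x <= y).
  by move=> y x z xy yz; exact: leq_trans xy (leq_trans (leq_ceil_multiple m_gt0 _) yz).
move=> j lt_j; have := sorted_ltn_nth ceil_trans 0 sortedC.
move=> /(_ j (size C)); rewrite !inE size_rcons !nth_rcons lt_j ltnn eqxx.
by apply; rewrite // ltnS ltnW.
Qed.

Section AddColumn.
Variables (m a b : nat) (C : seq nat) (c : nat).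
Hypotheses (m_gt0 : 0 < m) (size_lt : size C < a) (cb : c <= b).
Local Notation T := ('I_a * 'I_b)%type.
Local Notation C' := (rcons C c).
Implicit Types S : {set T}.

Lemma placement_col_lt S d : placement m C S -> d \in S -> d.1 < size C.
Proof.
by move=> /placementP [inC _] /inC; case: (ltnP d.1 (size C)) => // /(nth_default 0) ->.
Qed.

Definition uses_new_col S := [exists d in S, d.1 == size C :> nat].

Lemma placement_rcons_unused S : placement m C' S && ~~ uses_new_col S = placement m C S.
Proof.
apply/idP/idP => [/andP [/placementP [inC' apart] /existsPn old]|PS].
  apply/placementP; split=> // d Sd; have := inC' d Sd; rewrite nth_rcons.
  case: ifP => // _; case: ifP => // /eqP dN.
  by have := old d; rewrite Sd dN eqxx.
have col := placement_col_lt PS; move/placementP: PS => [inC apart].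
apply/andP; split.
  by apply/placementP; split=> // d Sd; rewrite nth_rcons col //; exact: inC.
apply/existsPn => d; apply/nandP.
by case: (boolP (d \in S)) => [/col/ltn_eqF ->|]; [right | left].
Qed.

Definition new_col : 'I_a := Ordinal size_lt.

Definition add_rook (p : {set T} * 'I_b) : {set T} := (new_col, p.2) |: p.1.

Definition extensions k := [set p : {set T} * 'I_b |
  (placement m C p.1 && (#|p.1| == k)) && ((p.2 < c) && free_row m p.1 p.2)].

Lemma new_col_notin S r : placement m C S -> (new_col, r) \notin S.
Proof. by move=> PS; apply/negP => /(placement_col_lt PS); rewrite ltnn. Qed.

Lemma add_rook_inj k : {in extensions k &, injective add_rook}.
Proof.
move=> [S1 r1] [S2 r2]; rewrite !inE /= => /andP [/andP [P1 _] _] /andP [/andP [P2 _] _].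
rewrite /add_rook /= => eq12.
have : (new_col, r1) \in (new_col, r2) |: S2 by rewrite -eq12 setU11.
rewrite in_setU1 (negbTE (new_col_notin r1 P2)) orbF => /eqP [r12]; subst r2.
by rewrite -(setU1K (new_col_notin r1 P1)) eq12 setU1K // new_col_notin.
Qed.

Lemma imset_add_rook k :
  add_rook @: extensions k = [set S | placement m C' S && (#|S| == k.+1) & uses_new_col S].
Proof.
apply/setP => S; rewrite inE; apply/imsetP/idP.
- move=> [[S0 r]]; rewrite inE /= => /andP [/andP [P0 /eqP card0] /andP [rc /forall_inP free]] ->.
  have col := placement_col_lt P0; move/placementP: P0 => [inC apart].
  rewrite /add_rook /= cardsU1 new_col_notin ?card0; last exact/placementP.
  apply/andP; split; last by apply/existsP; exists (new_col, r); rewrite setU11 eqxx.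
  rewrite add1n eqxx andbT; apply/placementP; split=> [d|d1 d2].
    by rewrite in_setU1 => /orP [/eqP -> /=|Sd]; rewrite nth_rcons ?ltnn ?eqxx ?col ?inC.
  rewrite !in_setU1 => /orP [/eqP ->|S1] /orP [/eqP ->|S2] //=; rewrite ?eqxx //.
  + by move=> _; rewrite -(inj_eq val_inj) /= eq_sym (ltn_eqF (col _ S2)) eq_sym free.
  + by move=> _; rewrite -(inj_eq val_inj) /= (ltn_eqF (col _ S1)) free.
  + exact: apart.
- move=> /andP [/andP [/placementP [inC' apart] /eqP cardS] /existsP [d0 /andP [Sd0 /eqP d0N]]].
  have d0E : d0 = (new_col, d0.2).
    by case: d0 d0N {Sd0} => x y /= xN; congr pair; apply: val_inj.
  exists (S :\ d0, d0.2); last by rewrite /add_rook /= -d0E setD1K.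
  move: cardS; rewrite (cardsD1 d0) Sd0 add1n => -[cardS].
  rewrite inE /= cardS eqxx andbT; apply/andP; split.
    apply/placementP; split=> [d|d1 d2]; rewrite ?in_setD1.
      move=> /andP [dd0 Sd]; have /andP [col _] := apart _ _ Sd Sd0 dd0.
      have := inC' d Sd; rewrite nth_rcons -d0N; move: col; rewrite -(inj_eq val_inj) => /negbTE ->.
      by case: ifP.
    by move=> /andP [_ S1] /andP [_ S2]; exact: apart.
  have := inC' d0 Sd0; rewrite d0N nth_rcons ltnn eqxx => -> /=.
  apply/forall_inP => d; rewrite in_setD1 => /andP [dd0 Sd].
  by have /andP [_] := apart _ _ Sd Sd0 dd0.
Qed.

Lemma rook_count_rcons_sum k :
  rook_count m a b C' k.+1 = rook_count m a b C k.+1 +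
    \sum_(S : {set T} | placement m C S && (#|S| == k))
      #|[set r : 'I_b | (r < c) && free_row m S r]|.
Proof.
rewrite /rook_count -(cardID [set S | uses_new_col S]) addnC; congr (_ + _).
  by apply: eq_card => S; rewrite !inE -placement_rcons_unused andbCA andbA.
rewrite -(eq_card (A := add_rook @: extensions k)) => [|S]; last first.
  by rewrite imset_add_rook !inE.
rewrite (card_in_imset (@add_rook_inj k)) -sum1_card.
rewrite (eq_bigl (fun p : {set T} * 'I_b => (placement m C p.1 && (#|p.1| == k)) &&
  ((p.2 < c) && free_row m p.1 p.2))) => [|p]; last by rewrite inE.
rewrite -(pair_big_dep (fun S : {set T} => placement m C S && (#|S| == k))
  (fun S (r : 'I_b) => (r < c) && free_row m S r) (fun _ _ => 1)) /=.
by apply: eq_bigr => S _; rewrite sum1dep_card.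
Qed.

(* Every level used by a rook of C then lies below c, so a placement of k rooks
   leaves exactly c - m k free rows in the new column. *)
Hypothesis below : forall j, j < size C -> ceil_multiple m (nth 0 C j) <= c.

Lemma rook_count_rcons k :
  Posz (rook_count m a b C' k.+1) = (Posz (rook_count m a b C k.+1) +
    Posz (rook_count m a b C k) * (Posz c - Posz (m * k)))%R.
Proof.
have free S : placement m C S -> #|[set r : 'I_b | (r < c) && free_row m S r]| + m * #|S| = c.
  move=> PS; apply: (card_free_rows m_gt0 cb PS) => d Sd.
  apply: leq_trans (below (placement_col_lt PS Sd)) => /=.
  by apply: (next_multiple_le_ceil m_gt0); move/placementP: PS => [inC _]; exact: inC.
rewrite rook_count_rcons_sum (eq_bigr (fun _ => c - m * k)) => [|S /andP [PS /eqP <-]].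
  rewrite sum_nat_cond_const -/(rook_count m a b C k) PoszD PoszM; congr (_ + _)%R.
  case: (posnP (rook_count m a b C k)) => [->|/card_gt0P [S]]; first by rewrite !mul0r.
  by rewrite inE => /andP [PS /eqP <-]; rewrite subzn // -(free S PS) leq_addl.
by have := free S PS; lia.
Qed.

End AddColumn.

Definition rook_step m (h : nat) (F : nat -> int) : nat -> int :=
  fun k => if k is k'.+1 then (F k + F k' * (Posz h - Posz (m * k')))%R else F 0.

Definition rook_fold m (C : seq nat) : nat -> int :=
  foldl (fun F h => rook_step m h F) (fun k => Posz (k == 0)) C.

Lemma rook_count_fold m a b C : 0 < m -> ceil_sorted m C -> size C <= a ->
  (forall j, nth 0 C j <= b) -> forall k, Posz (rook_count m a b C k) = rook_fold m C k.
Proof.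
move=> m_gt0; elim/last_ind: C => [|C c IH] sortedC sizeC bC k.
  by case: k => [|k]; rewrite ?rook_count0 ?rook_count_nil.
have [sortedC' below] := ceil_sorted_rcons m_gt0 sortedC.
rewrite size_rcons in sizeC.
have bC' j : nth 0 C j <= b.
  by have := bC j; rewrite nth_rcons; case: ltnP => // /(nth_default 0) ->.
have cb : c <= b by have := bC (size C); rewrite nth_rcons ltnn eqxx.
rewrite /rook_fold foldl_rcons -/(rook_fold m C); case: k => [|k] /=.
  by rewrite !rook_count0 -IH ?rook_count0 // ltnW.
by rewrite rook_count_rcons // -!IH // ltnW.
Qed.

(** * Root sequences *)

(* [stair_sub m 0] maps a board to its root vector read in nat, and back: it is an
   involution on sequences below the staircase i |-> m i.  The offset j serves
   the recursion. *)
Fixpoint stair_sub m j (s : seq nat) : seq nat :=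
  if s is x :: s' then (m * j - x) :: stair_sub m j.+1 s' else [::].

Lemma size_stair_sub m j s : size (stair_sub m j s) = size s.
Proof. by elim: s j => [|x s IH] j //=; rewrite IH. Qed.

Lemma nth_stair_sub m j s i :
  i < size s -> nth 0 (stair_sub m j s) i = m * (j + i) - nth 0 s i.
Proof.
elim: s j i => [|x s IH] j [|i] //= lt_i; first by rewrite addn0.
by rewrite IH // addSnnS.
Qed.

Lemma stair_subK m j s : (forall i, i < size s -> nth 0 s i <= m * (j + i)) ->
  stair_sub m j (stair_sub m j s) = s.
Proof.
move=> s_le; apply: (@eq_from_nth _ 0) => [|i]; rewrite !size_stair_sub // => lt_i.
by rewrite !nth_stair_sub ?size_stair_sub // subKn // s_le.
Qed.

Lemma floorm_nat m x : floorm m (Posz x) = Posz (x %/ m * m).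
Proof. by rewrite /floorm modz_nat subzn ?leq_mod // {1}(divn_eq x m) addnK. Qed.

Lemma ceil_sortedE m B : 0 < m -> is_board B /\ singleton m B <-> ceil_sorted m B.
Proof.
move=> m_gt0; rewrite /is_board /ceil_sorted /singleton.
have modE x : (Posz x - floorm m (Posz x) != 0)%R = (x %% m != 0).
  by rewrite floorm_nat subzn ?leq_divM // {1}(divn_eq x m) addKn.
have floorE x y : (floorm m (Posz x) < floorm m (Posz y))%R = (x %/ m < y %/ m).
  by rewrite !floorm_nat ltz_nat ltn_mul2r m_gt0.
split=> [[/(sortedP 0) sorted_B single_B]|/(sortedP 0) ceil_B].
  apply/(sortedP 0) => i lt_i; rewrite ceil_multiple_leq // sorted_B //=.
  by apply/implyP; rewrite -modE -floorE; exact: single_B.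
have ceil_i i : i.+1 < size B ->
    (nth 0 B i <= nth 0 B i.+1) && ((nth 0 B i %% m != 0) ==> (nth 0 B i %/ m < nth 0 B i.+1 %/ m)).
  by move=> lt_i; rewrite -ceil_multiple_leq // ceil_B.
split=> [|i /ceil_i /andP [_ /implyP single]]; first by apply/(sortedP 0) => i /ceil_i /andP [].
by rewrite modE floorE.
Qed.

Lemma root_vec_ge0_leq m B : (forall z, z \in root_vec m B -> 0 <= z)%R ->
  forall j, j < size B -> nth 0 B j <= m * j.
Proof.
move=> ge0 j lt_j; rewrite -lez_nat -subr_ge0; apply: ge0.
by apply/mapP; exists j; rewrite ?mem_iota.
Qed.

Lemma root_vec_stair_sub m B : (forall j, j < size B -> nth 0 B j <= m * j) ->
  root_vec m B = map Posz (stair_sub m 0 B).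
Proof.
move=> B_le; apply: (@eq_from_nth _ 0%R) => [|i]; rewrite !size_map ?size_iota ?size_stair_sub //.
move=> lt_i; rewrite (nth_map 0) ?size_iota // (nth_map 0) ?size_stair_sub //.
by rewrite nth_iota // nth_stair_sub // subzn // B_le.
Qed.

Definition admissible m (z : seq nat) :=
  nth 0 z 0 = 0 /\ sorted (fun x y => y <= next_multiple m x) z.

Lemma admissible_le m z : admissible m z -> forall i, i < size z -> nth 0 z i <= m * i.
Proof.
move=> [z0 /(sortedP 0) z_le]; elim=> [|i IH] lt_i; first by rewrite z0.
have := next_multiple_leq_add m (nth 0 z i); have := IH (ltnW lt_i); have := z_le i lt_i.
rewrite mulnS; lia.
Qed.

Lemma ceil_stair_sub_step m j x y : 0 < m -> x <= m * j -> y <= m * j.+1 ->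
  (ceil_multiple m (m * j - x) <= m * j.+1 - y) = (y <= next_multiple m x).
Proof.
move=> m_gt0 x_le; rewrite ceil_multiple_sub // /next_multiple mulSn mulnS.
move: (leq_divM x m) x_le; move: (x %/ m * m) (m * j) => F mj; lia.
Qed.

Lemma ceil_sorted_stair_sub m z : 0 < m -> (forall i, i < size z -> nth 0 z i <= m * i) ->
  ceil_sorted m (stair_sub m 0 z) = sorted (fun x y => y <= next_multiple m x) z.
Proof.
move=> m_gt0 z_le.
have step i : i.+1 < size z -> (ceil_multiple m (nth 0 (stair_sub m 0 z) i) <=
    nth 0 (stair_sub m 0 z) i.+1) = (nth 0 z i.+1 <= next_multiple m (nth 0 z i)).
  move=> lt_i; have lt_i' := ltnW lt_i.
  by rewrite !nth_stair_sub // !add0n ceil_stair_sub_step // z_le.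
apply/(sortedP 0)/(sortedP 0) => sorted_z i; rewrite ?size_stair_sub => lt_i.
  by rewrite -step // sorted_z ?size_stair_sub.
by rewrite step // sorted_z.
Qed.

Lemma admissible_board m w : 0 < m -> admissible m w ->
  [/\ is_board (stair_sub m 0 w), singleton m (stair_sub m 0 w) &
      root_vec m (stair_sub m 0 w) = map Posz w].
Proof.
move=> m_gt0 adm; have w_le := admissible_le adm.
have wK : stair_sub m 0 (stair_sub m 0 w) = w by apply: stair_subK => i; rewrite add0n; exact: w_le.
have [board single] : is_board (stair_sub m 0 w) /\ singleton m (stair_sub m 0 w).
  by apply/ceil_sortedE; rewrite // ceil_sorted_stair_sub //; case: adm.
split=> //; rewrite root_vec_stair_sub ?wK // => j; rewrite size_stair_sub => lt_j.
by rewrite nth_stair_sub // leq_subr.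
Qed.

Lemma board_admissible m B : 0 < m -> is_board B -> singleton m B ->
  (forall j, j < size B -> nth 0 B j <= m * j) ->
  admissible m (stair_sub m 0 B) /\ stair_sub m 0 (stair_sub m 0 B) = B.
Proof.
move=> m_gt0 board single B_le.
have BK : stair_sub m 0 (stair_sub m 0 B) = B.
  by apply: stair_subK => i; rewrite add0n; exact: B_le.
split=> //; split; first by case: (B) => //= x s; rewrite muln0.
rewrite -ceil_sorted_stair_sub // ?BK; first exact/ceil_sortedE.
by move=> i; rewrite size_stair_sub => lt_i; rewrite nth_stair_sub // leq_subr.
Qed.

(* [rook_step] for a column j of height m j - x.  Two consecutive steps commute,
   which makes the rook numbers a function of the multiset of root entries. *)
Definition root_step m j x (F : nat -> int) : nat -> int :=
  fun k => if k is k'.+1 then (F k + F k' * (Posz (m * j) - Posz x - Posz (m * k')))%R else F 0.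

Fixpoint root_fold m j (z : seq nat) (F : nat -> int) : nat -> int :=
  if z is x :: z' then root_fold m j.+1 z' (root_step m j x F) else F.

Lemma root_step_comm m j x y F :
  root_step m j.+1 y (root_step m j x F) = root_step m j.+1 x (root_step m j y F).
Proof.
apply: functional_extensionality => -[|[|k]] //=; rewrite ?muln0 ?subr0; first ring.
rewrite !PoszM; ring.
Qed.

Lemma root_fold_perm m j z w F : perm_eq z w -> root_fold m j z F = root_fold m j w F.
Proof.
have root_fold_cons_cat x s1 s2 j' F' :
    root_fold m j' (s1 ++ x :: s2) F' = root_fold m j' (x :: s1 ++ s2) F'.
  elim: s1 j' F' => [|y s1 IH] j' F' //=.
  by rewrite IH /= root_step_comm.
elim: z w j F => [|x z IH] w j F; first by rewrite perm_sym => /perm_nilP ->.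
move=> zw; have xw : x \in w by rewrite -(perm_mem zw) mem_head.
move: zw; case/splitPr: xw => w1 w2 zw; rewrite root_fold_cons_cat /=; apply: IH.
by rewrite -(perm_cons x) (perm_trans zw) // -cat1s perm_catCA.
Qed.

Lemma foldl_stair_sub m j z F : (forall i, i < size z -> nth 0 z i <= m * (j + i)) ->
  foldl (fun F h => rook_step m h F) F (stair_sub m j z) = root_fold m j z F.
Proof.
elim: z j F => [|x z IH] j F //= z_le.
have x_le : x <= m * j by have := z_le 0 isT; rewrite addn0.
rewrite IH => [|i lt_i]; last by have := z_le i.+1 lt_i; rewrite addSnnS.
congr root_fold; apply: functional_extensionality => -[|k] //=.
by rewrite -subzn.
Qed.

Lemma leq_nth_sumn (s : seq nat) j : nth 0 s j <= sumn s.
Proof.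
elim: s j => [|x s IH] [|j] //=; first exact: leq_addr.
exact: leq_trans (IH j) (leq_addl _ _).
Qed.

Lemma rook_num_root_fold m z k : 0 < m -> admissible m z ->
  Posz (rook_num m (stair_sub m 0 z) k) = root_fold m 0 z (fun k => Posz (k == 0)) k.
Proof.
move=> m_gt0 adm; have [board single _] := admissible_board m_gt0 adm.
rewrite rook_num_count rook_count_fold //; last exact: leq_nth_sumn.
  by rewrite /rook_fold foldl_stair_sub // => i; rewrite add0n; exact: admissible_le.
exact/ceil_sortedE.
Qed.

Lemma rook_equiv_perm m z w : 0 < m -> admissible m z -> admissible m w -> perm_eq z w ->
  rook_equiv m (stair_sub m 0 z) (stair_sub m 0 w).
Proof.
move=> m_gt0 adm_z adm_w zw k; apply/eqP; rewrite -eqz_nat.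
by rewrite !rook_num_root_fold // (root_fold_perm _ _ _ zw).
Qed.

(** * Moves *)

Definition swap (z : seq nat) p r := set_nth 0 (set_nth 0 z p (nth 0 z r)) r (nth 0 z p).

Lemma nth_swap z p r i : nth 0 (swap z p r) i =
  if i == r then nth 0 z p else if i == p then nth 0 z r else nth 0 z i.
Proof. by rewrite /swap nth_set_nth /= nth_set_nth. Qed.

Section Swap.
Variables (z : seq nat) (p r : nat).
Hypotheses (lt_p : p < size z) (lt_r : r < size z).

Lemma size_swap : size (swap z p r) = size z.
Proof. by rewrite /swap !size_set_nth !(maxn_idPr _) // size_set_nth (maxn_idPr _). Qed.

Lemma perm_swap : perm_eq z (swap z p r).
Proof.
apply/permP => a; have : a (nth 0 z p) <= count a z.
  case: (boolP (a _)) => // a_p; rewrite -has_count; apply/hasP.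
  by exists (nth 0 z p); rewrite ?mem_nth.
rewrite /swap !count_set_nth_ltn ?size_set_nth ?(maxn_idPr _) // nth_set_nth /= if_same.
by move: (a _ : nat) (a _ : nat) => ap ar; lia.
Qed.

End Swap.

(* Exchanging the root entries z_p < z_r moves z_r - z_p cells from column p to
   column r; the inequalities keep the sequence admissible.  The last one is
   vacuous when r is the last position, where nth returns 0. *)
Definition move m (z : seq nat) p r := [/\ 0 < p < r, r < size z, nth 0 z p < nth 0 z r,
  nth 0 z r <= next_multiple m (nth 0 z p.-1) & nth 0 z r.+1 <= next_multiple m (nth 0 z p)].

Lemma admissible_swap m z p r : 0 < m -> admissible m z -> move m z p r ->
  admissible m (swap z p r).
Proof.
move=> m_gt0 [z0 /(sortedP 0) z_le] [/andP [p_gt0 pr] rz zpr r_le r1_le].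
have pz := ltn_trans pr rz; have r_gt0 := ltn_trans p_gt0 pr.
split; first by rewrite nth_swap !ltn_eqF.
apply/(sortedP 0) => i; rewrite size_swap // => lt_i; rewrite !nth_swap.
case: (eqVneq i.+1 r) => [ir|ir].
  have -> : (i == r) = false by rewrite -ir ltn_eqF.
  case: (eqVneq i p) => _; first exact: ltnW (ltn_trans zpr (ltn_next_multiple m_gt0 _)).
  by rewrite ltnW // (leq_trans zpr) // -ir z_le // ir.
case: (eqVneq i.+1 p) => [ip|ip].
  have i_lt : i < p by rewrite -ip.
  by rewrite (ltn_eqF i_lt) (ltn_eqF (ltn_trans i_lt pr)); rewrite -ip in r_le.
case: (eqVneq i r) => [-> //|_]; case: (eqVneq i p) => [ei|_]; last exact: z_le.
by rewrite ei (leq_trans (z_le p _) (leq_next_multiple m (ltnW zpr))) // -ei.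
Qed.

Definition potential (z : seq nat) := \sum_(i < size z) i * nth 0 z i.

Lemma potential_swap z p r : p < r -> r < size z -> nth 0 z p < nth 0 z r ->
  potential (swap z p r) < potential z.
Proof.
move=> pr rz zpr; have pz := ltn_trans pr rz.
rewrite /potential size_swap //.
pose P : 'I_(size z) := Ordinal pz; pose R : 'I_(size z) := Ordinal rz.
have PR : R != P by rewrite -(inj_eq val_inj) /= gtn_eqF.
rewrite (bigD1 P) // [X in _ < X](bigD1 P) // (bigD1 R) // [X in _ < _ + X](bigD1 R) //=.
rewrite !nth_swap eqxx (ltn_eqF pr) eqxx.
rewrite (eq_bigr (fun i : 'I_(size z) => i * nth 0 z i)) => [|i /andP [iP iR]]; last first.
  by rewrite nth_swap -!(inj_eq val_inj) /= in iP iR *; rewrite (negbTE iP) (negbTE iR).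
rewrite !addnA ltn_add2r; nia.
Qed.

Lemma count_mem_gt1P (T : eqType) (x : T) (s : seq T) x0 :
  reflect (exists i j, [/\ i < j, j < size s, nth x0 s i = x & nth x0 s j = x])
          (1 < count_mem x s).
Proof.
elim: s => [|y s IH] /=; first by right=> -[i [j []]].
case: (eqVneq y x) => [->|yx] /=.
  rewrite add1n ltnS -has_count has_pred1; apply: (iffP idP) => [xs|[i [j [ij js _ xj]]]].
    by exists 0, (index x s).+1; rewrite /= !ltnS index_mem nth_index.
  by case: j ij js xj => // j _; rewrite ltnS => js /= <-; rewrite mem_nth.
apply: (iffP IH) => [[i [j [ij js xi xj]]]|[[|i] [[|j] [//= ij js xi xj]]]].
  by exists i.+1, j.+1.
  by rewrite -xi eqxx in yx.
by exists i, j.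
Qed.

(* The length K of the canonical prefix: floor_m(M - 1)/m + 1 ([mult_countE]). *)
Definition mult_count m M := (M + m.-1) %/ m.

Lemma ltn_mult_count m M j : 0 < m -> (j < mult_count m M) = (j * m < M).
Proof. by move=> m_gt0; rewrite /mult_count -[j < _]/(j.+1 <= _) leq_divRL // mulSn; lia. Qed.

Definition canonical_prefix m M (z : seq nat) := [/\ mult_count m M < size z,
  forall j, j < mult_count m M -> nth 0 z j = j * m & nth 0 z (mult_count m M) = M].

(* The defining property of the index i of the statement, read on z. *)
Definition critical m (z : seq nat) a :=
  (1 < count_mem a z) || (count_mem a z == 1) && ~~ (m %| a).

Lemma last_above (z : seq nat) v i : i < size z -> v < nth 0 z i ->
  exists r, [/\ i <= r, r < size z, v < nth 0 z r & forall j, r < j -> nth 0 z j <= v].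
Proof.
move=> iz vi; have ex : exists r, (r < size z) && (v < nth 0 z r) by exists i; rewrite iz vi.
have ub r : (r < size z) && (v < nth 0 z r) -> r <= size z by case/andP => /ltnW.
case: (ex_maxnP ex ub) => r /andP [rz vr] r_max.
exists r; split=> // [|j rj]; first by apply: r_max; rewrite iz vi.
rewrite leqNgt; apply/negP => vj.
case: (ltnP j (size z)) => jz; last by move: vj; rewrite nth_default.
by have := r_max j; rewrite jz vj leqNgt rj => /(_ isT).
Qed.

Section Moves.
Variables (m : nat) (z : seq nat).
Hypotheses (m_gt0 : 0 < m) (adm : admissible m z).

Lemma move_of_suffix_max p i : 0 < p < i -> i < size z -> nth 0 z p < nth 0 z i ->
  (forall j, i <= j -> nth 0 z j <= nth 0 z i) ->
  nth 0 z i <= next_multiple m (nth 0 z p.-1) -> exists r, move m z p r.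
Proof.
move=> /andP [p_gt0 pi] iz zpi i_max i_le.
have [r [ir rz zpr after]] := last_above iz zpi.
exists r; split=> //; first by rewrite p_gt0 (leq_trans pi ir).
  exact: leq_trans (i_max r ir) i_le.
exact: leq_trans (after _ (ltnSn r)) (ltnW (ltn_next_multiple m_gt0 _)).
Qed.

Section Stuck.
Hypothesis stuck : forall p r, ~ move m z p r.
Variable i : nat.
Hypotheses (iz : i < size z) (i_max : forall j, i <= j -> nth 0 z j <= nth 0 z i).

Lemma stuck_below p : 0 < p < i -> nth 0 z p < nth 0 z i ->
  next_multiple m (nth 0 z p.-1) < nth 0 z i.
Proof.
move=> pi zpi; rewrite ltnNge; apply/negP => i_le.
by have [r] := move_of_suffix_max pi iz zpi i_max i_le; apply: stuck.
Qed.

Lemma stuck_step q : q.+1 < i -> m * ((nth 0 z i).-1 %/ m) <= nth 0 z q ->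
  nth 0 z i <= nth 0 z q.+1.
Proof.
move=> qi s_le; rewrite leqNgt; apply/negP => zqi.
have := stuck_below (qi : 0 < q.+1 < i) zqi; rewrite ltnNge -pred_Sn.
by rewrite (leq_next_multiple_floor m_gt0 s_le).
Qed.

Lemma stuck_stays_above p j : p < j < i -> m * ((nth 0 z i).-1 %/ m) <= nth 0 z p ->
  nth 0 z i <= nth 0 z j.
Proof.
move=> /andP [pj ji] s_le; elim: j pj ji => // j IH; rewrite ltnS leq_eqVlt.
case/orP => [/eqP <- pi|pj ji]; first exact: stuck_step.
apply: stuck_step => //; apply: leq_trans (IH pj (ltnW ji)).
by rewrite mulnC (leq_trans (leq_divM _ _)) ?leq_pred.
Qed.

Lemma stuck_floor_once : 0 < nth 0 z i ->
  (forall j, i < j -> nth 0 z j < m * ((nth 0 z i).-1 %/ m)) ->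
  count_mem (m * ((nth 0 z i).-1 %/ m)) z <= 1.
Proof.
move=> zi_gt0 after; have s_lt := floor_pred_lt m zi_gt0.
rewrite leqNgt; apply/(count_mem_gt1P _ _ 0) => -[j1 [j2 [j12 j2z z1 z2]]].
case: (ltngtP j2 i) => [j2i|ij2|j2i].
- have := stuck_stays_above (p := j1) (j := j2); rewrite j12 j2i z1 z2.
  by move/(_ isT (leqnn _)); rewrite leqNgt s_lt.
- by have := after _ ij2; rewrite z2 ltnn.
- by move: s_lt; rewrite -z2 j2i ltnn.
Qed.

End Stuck.

Lemma critical_below t : t < size z -> (forall j, j < t -> nth 0 z j = j * m) ->
  nth 0 z t < t * m -> critical m z (nth 0 z t).
Proof.
move=> tz pre zt; rewrite /critical; case: (boolP (m %| nth 0 z t)) => [/dvdnP [q zq]|_].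
  apply/orP; left; apply/(count_mem_gt1P _ _ 0); exists q, t.
  have q_lt : q < t by rewrite -(ltn_pmul2r m_gt0) -zq.
  by rewrite zq pre.
rewrite /= andbT orbC eq_sym -leq_eqVlt -has_count has_pred1; exact: mem_nth.
Qed.

Section Deviation.
Variable M : nat.
Hypothesis Mz : M \in z.
Local Notation K := (mult_count m M).

Lemma first_deviation : ~ canonical_prefix m M z ->
  exists t, [/\ 0 < t <= K, t < size z, forall j, j < t -> nth 0 z j = j * m &
    nth 0 z t != (if t < K then t * m else M)].
Proof.
move=> not_canon; pose L j := if j < K then j * m else M.
have ex : exists j, (j <= K) && ((size z <= j) || (nth 0 z j != L j)).
  apply: NNPP => none; apply: not_canon.
  have ok j : j <= K -> j < size z /\ nth 0 z j = L j.
    move=> jK; apply: NNPP => not_ok; apply: none; exists j; rewrite jK /=.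
    by case: ltnP => //= jz; apply/eqP => zj; apply: not_ok.
  have [Kz zK] := ok K (leqnn K).
  split=> // [j jK|]; last by rewrite zK /L ltnn.
  by have [_ ->] := ok j (ltnW jK); rewrite /L jK.
case: (ex_minnP ex) => t /andP [tK bad] t_min.
have pre j : j < t -> j < size z /\ nth 0 z j = j * m.
  move=> jt; have jK := leq_trans jt tK.
  have : ~~ ((size z <= j) || (nth 0 z j != L j)).
    by apply: contraTN jt => bad_j; rewrite -leqNgt t_min // (ltnW jK).
  by rewrite negb_or -ltnNge negbK /L jK => /andP [? /eqP].
have uz : index M z < size z by rewrite index_mem.
have tz : t < size z.
  rewrite ltnNge; apply/negP => zt; have ut := leq_trans uz zt.
  have [_] := pre _ ut; rewrite nth_index // => /eqP.
  by rewrite eqn_leq leqNgt -ltn_mult_count // (leq_trans ut tK).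
have t_gt0 : 0 < t.
  rewrite lt0n; apply/eqP => t0; move: bad tz; rewrite t0 /L ltn_mult_count // mul0n lt0n.
  rewrite leqNgt => bad /[dup] z_gt0; rewrite z_gt0 /= in bad; case: adm bad => -> _.
  by case: (eqVneq M 0) => [->|M0] //=; rewrite M0.
by exists t; split=> //; [rewrite t_gt0 | move=> j /pre [] | move: bad; rewrite leqNgt tz].
Qed.

Lemma exists_move : (forall x, x \in z -> x <= M) ->
  (forall a s, critical m z a -> a < s -> s < M -> m %| s -> 1 < count_mem s z) ->
  ~ canonical_prefix m M z -> exists p r, move m z p r.
Proof.
move=> M_max gaps /first_deviation [t [/andP [t_gt0 tK] tz pre dev]].
set a := nth 0 z t in dev *.
have zt1 : next_multiple m (nth 0 z t.-1) = t * m.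
  by rewrite pre ?next_multiple_mul ?prednK // ltn_predL.
have a_le : a <= t * m.
  by rewrite -zt1; case: adm => _ /(sortedP 0) /(_ t.-1); rewrite prednK //; apply.
have uz : index M z < size z by rewrite index_mem.
have zu : nth 0 z (index M z) = M by rewrite nth_index.
have a_M : a < M.
  move: dev; case: ifP => [tK' _ | _ /negPf aM]; last by rewrite ltn_neqAle aM M_max ?mem_nth.
  by apply: leq_ltn_trans a_le _; rewrite -ltn_mult_count.
have tu : t < index M z.
  case: ltngtP => // [ut|ut]; last by move: a_M; rewrite /a ut zu ltnn.
  by have := leq_trans ut tK; rewrite ltn_mult_count // -(pre _ ut) zu ltnn.
have [rho [u_rho rhoz a_rho after]] : exists rho, [/\ index M z <= rho, rho < size z,
    a < nth 0 z rho & forall j, rho < j -> nth 0 z j <= a] by apply: last_above; rewrite ?zu.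
set w := nth 0 z rho in a_rho.
have rho_max j : rho <= j -> nth 0 z j <= w.
  by rewrite leq_eqVlt => /orP [/eqP <- //|/after/leq_trans]; apply; exact: ltnW.
apply: NNPP => no_move.
have stuck p r : ~ move m z p r by move=> mv; apply: no_move; exists p, r.
have tw : t * m < w.
  by rewrite -zt1; apply: (stuck_below stuck rhoz rho_max) => //; rewrite t_gt0 (leq_trans tu).
have wM : w <= M by apply/M_max/mem_nth.
have t_lt_K : t < K by rewrite ltn_mult_count // (leq_trans tw).
have a_tm : a < t * m by rewrite ltn_neqAle a_le andbT; rewrite t_lt_K in dev.
have w_gt0 : 0 < w := leq_ltn_trans (leq0n _) tw.
(* Being stuck, z contains s = floor_m(w - 1) at most once, although a < s < M. *)
set s := m * (w.-1 %/ m).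
have a_s : a < s.
  apply: leq_trans a_tm _; rewrite /s [m * _]mulnC leq_mul2r leq_divRL //.
  by rewrite -ltnS prednK // tw orbT.
have := stuck_floor_once stuck rhoz rho_max w_gt0 (fun j rj => leq_ltn_trans (after j rj) a_s).
have s_M : s < M := leq_trans (floor_pred_lt m w_gt0) wM.
by rewrite leqNgt (gaps a) ?dvdn_mulr // critical_below.
Qed.

End Deviation.
End Moves.

(** * Reaching the canonical prefix *)

Lemma clos_refl_trans_measure (T : Type) (R : relation T) (f : T -> nat) (P Q : T -> Prop) :
  (forall x, P x -> ~ Q x -> exists y, [/\ R x y, P y & f y < f x]) ->
  forall x, P x -> exists y, [/\ clos_refl_trans T R x y, P y & Q y].
Proof.
move=> step; elim/(well_founded_ind (well_founded_ltof T f)) => x IH Px.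
have [Qx|not_Qx] := classic (Q x); first by exists x; split=> //; exact: rt_refl.
have [y [Rxy Py /ltP fy]] := step x Px not_Qx.
have [w [yw Pw Qw]] := IH y fy Py.
by exists w; split=> //; exact: rt_trans (rt_step _ _ _ _ Rxy) yw.
Qed.

Lemma clos_refl_trans_map (A B : Type) (R : relation B) (f : A -> B) x y :
  clos_refl_trans A (fun x y => R (f x) (f y)) x y -> clos_refl_trans B R (f x) (f y).
Proof.
elim=> [{}x {}y|{}x|{}x {}y z _ IH1 _ IH2]; [exact: rt_step | exact: rt_refl | exact: rt_trans IH2].
Qed.

Section Graph.
Variable m : nat.
Hypothesis m_gt0 : 0 < m.

Lemma G_vertex_stair_sub z w : admissible m z -> admissible m w -> perm_eq z w ->
  G_vertex m (stair_sub m 0 z) (stair_sub m 0 w).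
Proof.
move=> adm_z adm_w zw; have [board single _] := admissible_board m_gt0 adm_w.
by split=> //; exact: rook_equiv_perm.
Qed.

Lemma G_edge_swap z p r : admissible m z -> move m z p r ->
  G_edge (stair_sub m 0 z) (stair_sub m 0 (swap z p r)).
Proof.
move=> adm mv; have adm' := admissible_swap m_gt0 adm mv.
case: mv => /andP [p_gt0 pr] rz zpr _ _; have pz := ltn_trans pr rz.
have size_swap := size_swap pz rz.
rewrite /G_edge /pad !size_stair_sub size_swap maxnn subnn /=.
exists p, r, (nth 0 z r - nth 0 z p); split; first by split; rewrite ?ltn_eqF ?subn_gt0.
have zr_p : nth 0 z r <= m * p.
  by have := admissible_le adm' (i := p); rewrite nth_swap (ltn_eqF pr) eqxx size_swap; apply.
have zr_r := admissible_le adm rz.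
rewrite !nth_stair_sub ?size_swap // !nth_swap (ltn_eqF pr) !eqxx !add0n; split; first lia.
split; first lia.
by move=> l lz lp lr; rewrite !nth_stair_sub ?size_swap // nth_swap (negbTE lp) (negbTE lr).
Qed.

Lemma canonical_reachable z M : admissible m z -> M \in z -> (forall x, x \in z -> x <= M) ->
  (forall a s, critical m z a -> a < s -> s < M -> m %| s -> 1 < count_mem s z) ->
  exists w, [/\ perm_eq z w, admissible m w,
    G_connected m (stair_sub m 0 z) (stair_sub m 0 z) (stair_sub m 0 w) &
    canonical_prefix m M w].
Proof.
move=> adm Mz M_max gaps.
pose R x y := G_step m (stair_sub m 0 z) (stair_sub m 0 x) (stair_sub m 0 y).
have [|w [cl [adm_w zw] canon]] := clos_refl_trans_measure (R := R) (f := potential)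
    (P := fun w => admissible m w /\ perm_eq z w) (Q := canonical_prefix m M) _
    (conj adm (perm_refl z)).
  move=> x [adm_x zx] not_canon; have count_x y : count_mem y x = count_mem y z.
    by move/permP: zx => ->.
  have [|||p [r mv]] := exists_move m_gt0 adm_x (M := M) _ _ _ not_canon.
  - by rewrite -(perm_mem zx).
  - by move=> y; rewrite -(perm_mem zx); exact: M_max.
  - by move=> a s; rewrite /critical !count_x; exact: gaps.
  have [/andP [_ pr] rz zpr _ _] := mv; have pz := ltn_trans pr rz.
  have zy : perm_eq z (swap x p r) := perm_trans zx (perm_swap pz rz).
  exists (swap x p r); split; last exact: potential_swap.
  - split; [exact: G_vertex_stair_sub | | exact: G_edge_swap].
    exact/G_vertex_stair_sub/zy/admissible_swap.
  - by split; first exact: admissible_swap.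
by exists w; split=> //; exact: (clos_refl_trans_map (R := G_step m _) cl).
Qed.

End Graph.

Lemma root_countE m B z k : root_vec m B = map Posz z ->
  root_count m B k = if k is Posz n then count_mem n z else 0.
Proof.
move=> rootB; rewrite /root_count rootB count_map.
case: k => n; first by apply: eq_count => x; rewrite /= eqz_nat.
by apply/eqP; rewrite -leqn0 leqNgt -has_count; apply/hasP => -[].
Qed.

Lemma critical_gaps_of_least_i m B z (M : nat) : root_vec m B = map Posz z ->
  (forall i : int, least_i m B i -> forall s : int, (0 <= s)%R -> (Posz m %| s)%Z ->
     (s < Posz M)%R -> (i < s)%R -> 1 < root_count m B s) ->
  forall a s, critical m z a -> a < s -> s < M -> m %| s -> 1 < count_mem s z.
Proof.
move=> rootB gaps a s crit_a a_s sM ms.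
have i_condE n : i_cond m B (Posz n) = critical m z n by rewrite /i_cond !(root_countE _ rootB).
have [i crit_i i_min] := ex_minnP (ex_intro (critical m z) a crit_a).
rewrite -(root_countE (Posz s) rootB); apply: (gaps (Posz i)) => //; rewrite ?ltz_nat //.
  split=> //; first by rewrite i_condE.
  by case=> // j _; rewrite ltz_nat i_condE; apply: contraTN => /i_min; rewrite leqNgt.
exact: leq_ltn_trans (i_min a crit_a) a_s.
Qed.

Lemma mult_countE m M : 0 < m ->
  absz ((floorm m (Posz M - 1) %/ Posz m)%Z + 1)%R = mult_count m M.
Proof.
move=> m_gt0; have m_neq0 : Posz m != 0 by rewrite eqz_nat -lt0n.
rewrite /floorm {1}(divz_eq (Posz M - 1) (Posz m)) addrK mulzK // /mult_count.
case: M => [|M].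
  by rewrite (_ : Posz 0 - 1 = Negz 0)%R // divNz_nat // div0n addNr divn_small // ltn_predL.
rewrite (_ : Posz M.+1 - 1 = Posz M)%R; last by rewrite -addn1 PoszD addrK.
by rewrite divz_nat -PoszD addSnnS prednK // -{2}(mul1n m) divnDMl // addn1.
Qed.

Unset Implicit Arguments.
Local Open Scope ring_scope.

Theorem lemma20 (m : nat) (B : seq nat) (M : int) :
  (0 < m)%N ->
  is_board B -> singleton m B -> (0 < size B)%N ->
  (forall z, z \in root_vec m B -> 0 <= z) ->
  root_count m B M != 0%N ->
  (forall k : int, root_count m B k != 0%N -> k <= M) ->
  (forall i : int, least_i m B i ->
     forall s : int, 0 <= s -> (m%:Z %| s)%Z -> s < M -> i < s ->
       (2 <= root_count m B s)%N) ->
  exists B' : seq nat,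
    [/\ size B' = size B, G_connected m B B B' &
      let K := absz ((floorm m (M - 1) %/ m%:Z)%Z + 1) in
      [/\ (K < size B')%N,
          forall j : nat, (j < K)%N -> nth 0 (root_vec m B') j = (j * m)%N%:Z &
          nth 0 (root_vec m B') K = M]].
Proof.
move=> m_gt0 board single _ root_ge0 M_in M_max gaps.
have [adm BK] := board_admissible m_gt0 board single (root_vec_ge0_leq root_ge0).
set z := stair_sub m 0 B in adm BK.
have rootB : root_vec m B = map Posz z by rewrite root_vec_stair_sub //; exact: root_vec_ge0_leq.
case: M M_in M_max gaps => M; rewrite (root_countE _ rootB) // => M_in M_max gaps.
have Mz : M \in z by rewrite -has_pred1 has_count lt0n.
have z_le x : x \in z -> (x <= M)%N.
  by move=> xz; rewrite -lez_nat M_max // (root_countE _ rootB) -lt0n -has_count has_pred1.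
have [w [zw adm_w conn [Kw pre_w wK]]] :=
  canonical_reachable m_gt0 adm Mz z_le (critical_gaps_of_least_i rootB gaps).
have [_ _ root_w] := admissible_board m_gt0 adm_w.
exists (stair_sub m 0 w); rewrite BK in conn; split=> //.
  by rewrite size_stair_sub -(perm_size zw) /z size_stair_sub.
rewrite /= mult_countE // root_w size_stair_sub; split=> // [j jK|].
  by rewrite (nth_map 0%N) ?pre_w // (ltn_trans jK).
by rewrite (nth_map 0%N) // wK.
Qed.
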